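(* Let $\mathcal{U},\mathcal{X}$ be Banach spaces with either $\mathcal{X}=\mathcal{U}^*$ or $\mathcal{U}=\mathcal{X}^*$, denote by $\langle\cdot,\cdot\rangle_{\mathcal{U},\mathcal{X}}$ the corresponding duality pairing, let $\mathcal{G}$ be a Hilbert space, $g^\delta\in\mathcal{G}$, and $K\in L(\mathcal{U},\mathcal{G})$ with an adjoint $K^*\in L(\mathcal{G},\mathcal{X})$ satisfying $(Ku,g)_\mathcal{G}=\langle u,K^*g\rangle_{\mathcal{U},\mathcal{X}}$ for all $u\in\mathcal{U}$, $g\in\mathcal{G}$. Let $\{\mathcal{R}_\alpha\}_{\alpha>0}$ be proper, convex, lower semicontinuous functionals $\mathcal{R}_\alpha:\mathcal{U}\to\mathbb{R}\cup\{+\infty\}$, let $G(g):=\frac12\|g-g^\delta\|_\mathcal{G}^2$, and $J_\alpha(u,g):=G(g)+\mathcal{R}_\alpha(u)$. Let $u_\alpha^\delta$ be a minimizer of $u\mapsto J_\alpha(u,Ku)$ over $\mathcal{U}$. Assume there is a family of functions $\phi_\alpha:\mathcal{U}\times\mathcal{U}\to[0,\infty)$ satisfying $$\lambda(1-\lambda)\phi_\alpha(u_1,u_2)\le\lambda\mathcal{R}_\alpha(u_1)+(1-\lambda)\mathcal{R}_\alpha(u_2)-\mathcal{R}_\alpha(\lambda u_1+(1-\lambda)u_2)$$ for all $u_1,u_2\in\mathcal{U}$, $\alpha>0$, $\lambda\in(0,1)$. Then every $v\in\mathcal{U}$ and $g^*\in\mathcal{G}$ satisfy $$\frac12\|K(u_\alpha^\delta-v)\|_\mathcal{G}^2+\phi_\alpha(u_\alpha^\delta,v)\le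 J_\alpha(v,Kv)-J_\alpha(u_\alpha^\delta,Ku_\alpha^\delta)\le\mathcal{R}_\alpha(v)+\mathcal{R}_\alpha^*(K^*g^* )+G(Kv)+G^*(-g^* ).$$
   Context: For a convex functional $F:\mathcal{U}\to\mathbb{R}\cup\{+\infty\}$, its Fenchel conjugate is defined on $\mathcal{X}$ by $F^*(x)=\sup_{u\in\mathcal{U}}\langle u,x\rangle_{\mathcal{U},\mathcal{X}}-F(u)$; for $G$ on the Hilbert space $\mathcal{G}$, $G^*(g^* )=\sup_{g\in\mathcal{G}}(g^*,g)_\mathcal{G}-G(g)$. *)

From mathcomp Require Import all_boot all_order all_algebra.
From mathcomp Require Import all_classical all_reals all_analysis.
Set Implicit Arguments. Unset Strict Implicit. Unset Printing Implicit Defensive.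
Import Order.TTheory GRing.Theory Num.Theory.
Import numFieldNormedType.Exports.
Local Open Scope classical_set_scope.
Local Open Scope ring_scope.

Definition bounded_linear {R : realType} (V W : normedModType R) (f : V -> W) :=
  (forall (a : R) (u v : V), f (a *: u + v) = a *: f u + f v) /\ continuous f.

(* [dual_of p]: the normed space X is (isometrically) the dual U^* of U,
   the identification being given by the pairing p : U -> X -> R:
   p is bilinear, the norm of x is the dual norm of p(.,x), and every
   continuous linear functional on U is of the form p(.,x). *)
Definition dual_of {R : realType} (U X : normedModType R) (p : U -> X -> R) :=
  [/\ (forall (a : R) u1 u2 x, p (a *: u1 + u2) x = a * p u1 x + p u2 x),
      (forall (a : R) u x1 x2, p u (a *: x1 + x2) = a * p u x1 + p u x2),
      (forall u x, `|p u x| <= `|x| * `|u|),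
      (forall x (e : R), 0 < e -> exists u, `|u| <= 1 /\ `|x| - e <= `|p u x|) &
      (forall f : U -> R, bounded_linear (f : U -> R^o) ->
         exists x, forall u, f u = p u x)].

Definition duality_pairing {R : realType} (U X : normedModType R) (p : U -> X -> R) :=
  dual_of p \/ dual_of (fun (x : X) (u : U) => p u x).

Definition hilbert_ip {R : realType} (G : normedModType R) (ip : G -> G -> R) :=
  [/\ (forall g h, ip g h = ip h g),
      (forall (a : R) g1 g2 h, ip (a *: g1 + g2) h = a * ip g1 h + ip g2 h) &
      (forall g, ip g g = `|g| ^+ 2)].

Local Open Scope ereal_scope.

Definition proper_fun {R : realType} (U : Type) (F : U -> \bar R) :=
  (forall u, F u != -oo) /\ exists u, F u \is a fin_num.

Definition convex_fun {R : realType} (U : lmodType R) (F : U -> \bar R) :=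
  forall (u1 u2 : U) (l : R), (0 < l < 1)%R ->
    F (l *: u1 + (1 - l) *: u2)%R <= l%:E * F u1 + (1 - l)%R%:E * F u2.

Definition fenchel_conj {R : realType} (U X : Type) (p : U -> X -> R)
  (F : U -> \bar R) (x : X) : \bar R :=
  ereal_sup (range (fun u => (p u x)%:E - F u)).

(* Put w_t := (1 - t) u + t v for the minimizer u.  Along this segment the data
   term is exactly quadratic, G(K w_t) = G(K u) + t s + t^2 c for some s and
   c = |K (v - u)|^2 / 2, and the phi-inequality bounds R(w_t) by the chord minus
   t (1 - t) phi.  With Delta = J(v) - J(u) this gives
   0 <= J(w_t) - J(u) <= t (Delta - c - phi) + t^2 (c + phi); dividing by t and
   letting t -> 0 yields the lower bound.  The upper bound is Fenchel-Young for R
   at u and for G at K u, whose pairing terms cancel because <u, K^* g^*> is the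
   inner product of K u and g^*. *)

From HB Require Import structures.
From mathcomp Require Import all_boot all_order all_algebra.
From mathcomp Require Import all_classical all_reals all_analysis.
From mathcomp Require Import ring lra.
Import Order.TTheory GRing.Theory Num.Theory.
Import numFieldNormedType.Exports.
Local Open Scope ring_scope.

Lemma le0_of_forall_mul_le_sqr (R : realFieldType) (x y : R) : 0 <= y ->
  (forall t, 0 < t < 1 -> t * x <= t ^+ 2 * y) -> x <= 0.
Proof.
move=> y_ge0 mul_le; rewrite leNgt; apply/negP => x_gt0.
have s_gt0 : 0 < x + y + 1 by lra.
pose t := x / (x + y + 1).
have t_gt0 : 0 < t by rewrite divr_gt0.
have t_lt1 : t < 1 by rewrite ltr_pdivrMr // mul1r; lra.
have t_def : t * (x + y + 1) = x by rewrite mulfVK // gt_eqF.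
have : x <= t * y.
  by rewrite -(ler_pM2l t_gt0) mulrA -expr2; apply: mul_le; rewrite t_gt0 t_lt1.
nra.
Qed.

Section HilbertSpace.
Context {R : realType} {G : normedModType R} {ip : G -> G -> R}.
Hypothesis hip : hilbert_ip ip.

Lemma hilbert_ipDl (g1 g2 h : G) : ip (g1 + g2) h = ip g1 h + ip g2 h.
Proof. by case: hip => _ ipL _; rewrite -[g1]scale1r ipL mul1r scale1r. Qed.

Lemma hilbert_ipZl (a : R) (g h : G) : ip (a *: g) h = a * ip g h.
Proof.
case: hip => _ ipL _.
have ip0 : ip 0 h = 0 by apply: (addrI (ip 0 h)); rewrite -hilbert_ipDl !addr0.
by rewrite -[a *: g]addr0 ipL ip0 addr0.
Qed.

Lemma hilbert_ipNr (g h : G) : ip g (- h) = - ip g h.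
Proof. by case: hip => ipC _ _; rewrite ipC -scaleN1r hilbert_ipZl ipC mulN1r. Qed.

Lemma hilbert_sqr_normDZ (x y : G) (t : R) :
  `|x + t *: y| ^+ 2 = `|x| ^+ 2 + 2 * t * ip x y + t ^+ 2 * `|y| ^+ 2.
Proof.
case: hip => ipC _ ipN2; rewrite -!ipN2 hilbert_ipDl hilbert_ipZl (ipC x) (ipC y).
by rewrite !hilbert_ipDl !hilbert_ipZl (ipC y x); ring.
Qed.

Lemma half_sqr_dist_segment (g0 a b : G) (t : R) :
  2^-1 * `|(1 - t) *: a + t *: b - g0| ^+ 2 =
  2^-1 * `|a - g0| ^+ 2 + t * ip (a - g0) (b - a) + t ^+ 2 * (2^-1 * `|b - a| ^+ 2).
Proof.
have -> : (1 - t) *: a + t *: b - g0 = (a - g0) + t *: (b - a).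
  rewrite scalerBl scalerBr scale1r addrAC -!addrA; congr (_ + _).
  by rewrite addrCA; congr (_ + _); rewrite addrC.
by rewrite hilbert_sqr_normDZ; field.
Qed.

Lemma half_sqr_dist_expand (g0 a b : G) :
  2^-1 * `|b - g0| ^+ 2 =
  2^-1 * `|a - g0| ^+ 2 + ip (a - g0) (b - a) + 2^-1 * `|b - a| ^+ 2.
Proof.
by have := half_sqr_dist_segment g0 a b 1; rewrite subrr scale0r add0r scale1r expr1n !mul1r.
Qed.

End HilbertSpace.

Local Open Scope ereal_scope.

Lemma fenchel_young {R : realType} {U X : Type} (p : U -> X -> R)
    (F : U -> \bar R) (u : U) (x : X) :
  (p u x)%:E - F u <= fenchel_conj p F x.
Proof. by apply: ereal_sup_ubound; exists u. Qed.

Lemma minimizer_fin_num {R : realType} {U : Type} {F : U -> \bar R} {Q : U -> R}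
    {u u0 : U} :
  (forall w, F w != -oo) -> F u0 \is a fin_num ->
  (Q u)%:E + F u <= (Q u0)%:E + F u0 -> F u \is a fin_num.
Proof.
move=> F_ninfty /fineK <-; have := F_ninfty u.
by case: (F u) => //= _; rewrite addey.
Qed.

Section QuadraticGrowth.
Context {R : realType} {U : lmodType R} {F : U -> \bar R} {Q : U -> R}.
Context {u v : U} {s c p : R}.
Hypotheses (F_ninfty : forall w, F w != -oo) (Fu_fin : F u \is a fin_num).
Hypothesis u_min : forall w, (Q u)%:E + F u <= (Q w)%:E + F w.
Hypothesis F_conv : forall t : R, (0 < t < 1)%R ->
  ((1 - t) * t * p)%:E + F ((1 - t) *: u + t *: v)%R <= (1 - t)%:E * F u + t%:E * F v.
Hypothesis Q_segment : forall t : R, (0 < t < 1)%R ->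
  Q ((1 - t) *: u + t *: v)%R = (Q u + t * s + t ^+ 2 * c)%R.
Hypothesis Q_v : Q v = (Q u + s + c)%R.
Hypotheses (c_ge0 : (0 <= c)%R) (p_ge0 : (0 <= p)%R).

Lemma quadratic_growth_minimizer :
  (c + p)%:E <= ((Q v)%:E + F v) - ((Q u)%:E + F u).
Proof.
have [r Fu] : exists r, F u = r%:E by exists (fine (F u)); rewrite fineK.
case Fv : (F v) => [rv | | ]; last by have := F_ninfty v; rewrite Fv.
- rewrite Fu -!EFinD lee_fin -subr_ge0 -oppr_le0.
  apply: (@le0_of_forall_mul_le_sqr _ _ (c + p)%R) => [|t t01]; first exact: addr_ge0.
  pose w := ((1 - t) *: u + t *: v)%R.
  have := u_min w; have := F_conv _ t01; rewrite Q_segment // Fu Fv.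
  case: (F w) => [rw | | ] //.
  rewrite -!EFinM -!EFinD !lee_fin Q_v => conv min.
  lra.
- by rewrite Fu addey //= addye // leey.
Qed.

End QuadraticGrowth.

Lemma primal_gap_le_duality_gap {R : realType} {U X : Type} {G : normedModType R}
    (pair : U -> X -> R) (ip : G -> G -> R) (K : U -> G) (Kadj : G -> X)
    (F : U -> \bar R) (q : G -> R) (u v : U) (g : G) :
  hilbert_ip ip -> (forall u g, ip (K u) g = pair u (Kadj g)) ->
  F u \is a fin_num ->
  ((q (K v))%:E + F v) - ((q (K u))%:E + F u) <=
  F v + fenchel_conj pair F (Kadj g) + (q (K v))%:E
    + fenchel_conj ip (fun h => (q h)%:E) (- g)%R.
Proof.
move=> hip hadj /fineK Fu.
have := leeD (leeD (leeD (lexx (F v)) (fenchel_young pair F u (Kadj g)))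
  (lexx (q (K v))%:E)) (fenchel_young ip (fun h => (q h)%:E) (K u) (- g)%R).
apply: le_trans.
rewrite -Fu -hadj (hilbert_ipNr hip).
case: (F v) => [rv | | ] //.
by rewrite -!EFinD lee_fin; lra.
Qed.

Local Close Scope ereal_scope.

Theorem proposition2p2 (R : realType)
  (U X G : completeNormedModType R)
  (pair : U -> X -> R) (hpair : duality_pairing pair)
  (ip : G -> G -> R) (hip : hilbert_ip ip)
  (gdelta : G)
  (K : U -> G) (hK : bounded_linear K)
  (Kadj : G -> X) (hKadj : bounded_linear Kadj)
  (hadj : forall u g, ip (K u) g = pair u (Kadj g))
  (Ra : R -> U -> \bar R)
  (hRproper : forall alpha, 0 < alpha -> proper_fun (Ra alpha))
  (hRconvex : forall alpha, 0 < alpha -> convex_fun (Ra alpha))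
  (hRlsc : forall alpha, 0 < alpha -> lower_semicontinuous (Ra alpha))
  (alpha : R) (halpha : 0 < alpha)
  (ua : U)
  (hmin : forall w : U,
     ((2^-1 * `|K ua - gdelta| ^+ 2)%:E + Ra alpha ua <=
      (2^-1 * `|K w - gdelta| ^+ 2)%:E + Ra alpha w)%E)
  (phi : R -> U -> U -> R)
  (hphi0 : forall a u1 u2, 0 < a -> 0 <= phi a u1 u2)
  (hphi : forall a (u1 u2 : U) (l : R), 0 < a -> 0 < l < 1 ->
     ((l * (1 - l) * phi a u1 u2)%:E + Ra a (l *: u1 + (1 - l) *: u2)%R <=
      l%:E * Ra a u1 + (1 - l)%R%:E * Ra a u2)%E)
  (v : U) (gstar : G) :
  let Gf := fun g : G => 2^-1 * `|g - gdelta| ^+ 2 in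
  let J := fun (u : U) (g : G) => ((Gf g)%:E + Ra alpha u)%E in
  ((2^-1 * `|K (ua - v)| ^+ 2 + phi alpha ua v)%:E
     <= J v (K v) - J ua (K ua))%E /\
  (J v (K v) - J ua (K ua)
     <= Ra alpha v + fenchel_conj pair (Ra alpha) (Kadj gstar)
        + (Gf (K v))%:E
        + fenchel_conj ip (fun g => (Gf g)%:E) (- gstar)%R)%E.
Proof.
move=> Gf J; rewrite {}/J {}/Gf.
pose Kl : {linear U -> G} := HB.pack K (GRing.isLinear.Build _ _ _ _ K hK.1).
have KB : {morph K : u w / u - w} := linearB Kl.
have KZ a : {morph K : u / a *: u} := linearZZ Kl a.
have KP a : {morph K : u w / a *: u + w} := linearP Kl a.
have K_segment t : K ((1 - t) *: ua + t *: v) = (1 - t) *: K ua + t *: K v.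
  by rewrite KP KZ.
have [R_ninfty [u0 Ru0]] := hRproper alpha halpha.
have Rua_fin : Ra alpha ua \is a fin_num.
  exact: (minimizer_fin_num (Q := fun w => 2^-1 * `|K w - gdelta| ^+ 2)) (hmin u0).
split; last exact: primal_gap_le_duality_gap.
rewrite KB distrC.
apply: (quadratic_growth_minimizer (Q := fun w => 2^-1 * `|K w - gdelta| ^+ 2)
  (s := ip (K ua - gdelta) (K v - K ua))) => //.
- move=> t /andP[t_gt0 t_lt1].
  have := hphi alpha ua v (1 - t) halpha; rewrite subKr; apply.
  by apply/andP; split; lra.
- by move=> t _ /=; rewrite K_segment (half_sqr_dist_segment hip).
- exact: (half_sqr_dist_expand hip).
- exact: hphi0.
Qed.
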